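(* Let $(I,<,\mathcal X,R,\mathrm{Mor})$ be a regular groupoid spine. Then: (1) there is a symmetric set $S$ with $R\subseteq S\subseteq I^2$ such that $(I,<,\mathcal X,R,\mathrm{Mor})$ extends to $S$; (2) in particular, if $|I|\ge 3$ then $(I,<,\mathcal X,R,\mathrm{Mor})$ extends to a groupoid.
   Context: A groupoid spine $(I,<,\mathcal X,R,\mathrm{Mor})$ consists of a linear order $(I,<)$, nonempty sets $\mathcal X=\{X_i:i\in I\}$, a nonempty relation $R\subseteq I^2$ containing all $(i,j)$ with $i<j$, and for each $(i,j)\in R$ a nonempty set $\operatorname{Mor}(i,j)$ of bijections $X_i\to X_j$, such that: if $(i,i)\in R$ then $\mathrm{id}_{X_i}\in\operatorname{Mor}(i,i)$; if $(i,j),(j,i)\in R$ and $f\in\operatorname{Mor}(i,j)$ then $f^{-1}\in\operatorname{Mor}(j,i)$; if $(i,j),(j,k),(i,k)\in R$, $f\in\operatorname{Mor}(i,j)$, $g\in\operatorname{Mor}(j,k)$ then $g\circ f\in\operatorname{Mor}(i,k)$. It is regular if for all $(i,j)\in R$, $x\in X_i$, $y\in X_j$ there is exactly one $f\in\operatorname{Mor}(i,j)$ with $f(x)=y$. For $R\subseteq S\subseteq I^2$, the spine extends to $S$ if one can define $\operatorname{Mor}(i,j)$ for $(i,j)\in S\setminus R$ (keeping $\operatorname{Mor}(i,j)$ unchanged for $(i,j)\in R$) so that $(I,<,\mathcal X,S,\mathrm{Mor})$ is a groupoid spine; it extends to a groupoid if it extends to $S=I^2$. $S$ is symmetric if $(i,j)\in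 S$ implies $(j,i)\in S$. *)

Set Implicit Arguments.

Definition strict_linear_order (I : Type) (lt : I -> I -> Prop) : Prop :=
  (forall i, ~ lt i i) /\
  (forall i j k, lt i j -> lt j k -> lt i k) /\
  (forall i j, lt i j \/ i = j \/ lt j i).

Definition bijection (A B : Type) (f : A -> B) : Prop :=
  (forall x y, f x = f y -> x = y) /\ (forall y, exists x, f x = y).

(* A groupoid spine (I,<,X,R,Mor).  Mor i j is a set of functions
   X i -> X j; only its values for (i,j) in R are meaningful. *)
Definition groupoid_spine (I : Type) (lt : I -> I -> Prop) (X : I -> Type)
    (R : I -> I -> Prop) (Mor : forall i j, (X i -> X j) -> Prop) : Prop :=
  strict_linear_order lt /\
  (forall i, inhabited (X i)) /\
  (exists i j, R i j) /\
  (forall i j, lt i j -> R i j) /\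
  (forall i j, R i j -> exists f, Mor i j f) /\
  (forall i j, R i j -> forall f, Mor i j f -> bijection f) /\
  (forall i, R i i -> Mor i i (fun x => x)) /\
  (forall i j, R i j -> R j i -> forall f, Mor i j f ->
     exists g, Mor j i g /\ (forall x, g (f x) = x) /\ (forall y, f (g y) = y)) /\
  (forall i j k, R i j -> R j k -> R i k -> forall f g,
     Mor i j f -> Mor j k g -> Mor i k (fun x => g (f x))).

Definition regular_spine (I : Type) (X : I -> Type) (R : I -> I -> Prop)
    (Mor : forall i j, (X i -> X j) -> Prop) : Prop :=
  forall i j, R i j -> forall (x : X i) (y : X j),
    exists! f, Mor i j f /\ f x = y.

(* The spine extends to S (R ⊆ S assumed separately): Mor can be defined
   on S \ R, keeping it unchanged on R, to give a groupoid spine. *)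
Definition spine_extends_to (I : Type) (lt : I -> I -> Prop) (X : I -> Type)
    (R : I -> I -> Prop) (Mor : forall i j, (X i -> X j) -> Prop)
    (S : I -> I -> Prop) : Prop :=
  exists Mor' : forall i j, (X i -> X j) -> Prop,
    (forall i j, R i j -> forall f, Mor' i j f <-> Mor i j f) /\
    groupoid_spine lt X S Mor'.

Definition symmetric_rel (I : Type) (S : I -> I -> Prop) : Prop :=
  forall i j, S i j -> S j i.

(* (1) Let S = R ∪ R⁻¹ and add to Mor(i,j), for (j,i) ∈ R, the inverses of
   the maps in Mor(j,i).  By regularity a morphism is determined by a single
   value, so closure under composition along a triangle (i,j,m) survives
   rotating the triangle and reversing it.  Every triangle of S is a
   permutation of a triangle of R (sort its vertices by <, or use a loop
   (i,i) ∈ R), on which closure is the composition axiom of the spine.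
   (2) S already contains every pair of distinct indices.  Given a third
   index k, take as morphisms i → j the composites b⁻¹ ∘ a of morphisms
   a : i → k and b : j → k of S.  This does not depend on k, agrees with S
   where S is defined, and supplies the missing loops. *)

From Stdlib Require Import Classical FunctionalExtensionality ClassicalEpsilon.
Set Implicit Arguments.

Definition are_inverse (A B : Type) (f : A -> B) (g : B -> A) : Prop :=
  (forall x, g (f x) = x) /\ (forall y, f (g y) = y).

Lemma are_inverse_sym (A B : Type) (f : A -> B) (g : B -> A) :
  are_inverse f g -> are_inverse g f.
Proof. intros [gf fg]; split; assumption. Qed.

Lemma are_inverse_unique (A B : Type) (f : A -> B) (g g' : B -> A) :
  are_inverse f g -> are_inverse f g' -> g = g'.
Proof.
  intros [gf _] [_ fg']. extensionality y.
  rewrite <- (fg' y) at 1. apply gf.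
Qed.

Lemma bijection_inverse (A B : Type) (f : A -> B) :
  bijection f -> exists g, are_inverse f g.
Proof.
  intros [f_inj f_surj].
  destruct (choice _ f_surj) as [g fg].
  exists g. split; [intros x; apply f_inj, fg | exact fg].
Qed.

Lemma inverse_bijection (A B : Type) (f : A -> B) (g : B -> A) :
  are_inverse f g -> bijection f.
Proof.
  intros [gf fg]. split.
  - intros x y E. rewrite <- (gf x), <- (gf y), E. reflexivity.
  - intros y. exists (g y). apply fg.
Qed.

Lemma three_points_avoid2 (I : Type) :
  (exists a b c : I, a <> b /\ a <> c /\ b <> c) ->
  forall i j : I, exists k, k <> i /\ k <> j.
Proof.
  intros (a & b & c & Nab & Nac & Nbc) i j.
  destruct (classic (a = i \/ a = j)) as [Ha | Ha]; [| exists a; tauto].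
  destruct (classic (b = i \/ b = j)) as [Hb | Hb]; [| exists b; tauto].
  exists c. split; intros <-; intuition congruence.
Qed.

Definition sym_closure (I : Type) (R : I -> I -> Prop) (i j : I) : Prop :=
  R i j \/ R j i.

Lemma sym_closure_symmetric (I : Type) (R : I -> I -> Prop) :
  symmetric_rel (sym_closure R).
Proof. intros i j [Rij | Rji]; [right | left]; assumption. Qed.

Lemma sym_closure_total {I : Type} {lt R : I -> I -> Prop} :
  strict_linear_order lt -> (forall i j, lt i j -> R i j) ->
  forall i j, i <> j -> sym_closure R i j.
Proof.
  intros (_ & _ & lt_total) R_lt i j Nij.
  destruct (lt_total i j) as [Lij | [Eij | Lji]].
  - left; apply R_lt; assumption.
  - contradiction.
  - right; apply R_lt; assumption.
Qed.

Lemma regular_unique_at (I : Type) (X : I -> Type) (S : I -> I -> Prop)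
    (M : forall i j, (X i -> X j) -> Prop) {i j : I} {h h' : X i -> X j} {x : X i} :
  regular_spine X S M -> S i j -> M i j h -> M i j h' -> h x = h' x -> h = h'.
Proof.
  intros M_reg Sij Mh Mh' E.
  destruct (M_reg i j Sij x (h x)) as [f [_ f_unique]].
  transitivity f; [symmetry |]; apply f_unique; split; auto.
Qed.

Lemma spine_extends_to_trans {I : Type} {lt : I -> I -> Prop} {X : I -> Type}
    {R S T : I -> I -> Prop} {Mor Mor' : forall i j, (X i -> X j) -> Prop} :
  (forall i j, R i j -> S i j) ->
  (forall i j, R i j -> forall f, Mor' i j f <-> Mor i j f) ->
  spine_extends_to lt X S Mor' T -> spine_extends_to lt X R Mor T.
Proof.
  intros RS agrees (Mor'' & agrees' & spine).
  exists Mor''. split; [| exact spine].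
  intros i j Rij f. exact (iff_trans (agrees' i j (RS i j Rij) f) (agrees i j Rij f)).
Qed.

Definition comp_closed {I : Type} {X : I -> Type}
    (M : forall i j, (X i -> X j) -> Prop) (i j m : I) : Prop :=
  forall p q, M i j p -> M j m q -> M i m (fun x => q (p x)).

Definition triangle_closed {I : Type} {X : I -> Type}
    (M : forall i j, (X i -> X j) -> Prop) (i j m : I) : Prop :=
  comp_closed M i j m /\ comp_closed M j m i /\ comp_closed M m i j /\
  comp_closed M m j i /\ comp_closed M j i m /\ comp_closed M i m j.

Section Triangles.

Variables (I : Type) (X : I -> Type) (S : I -> I -> Prop)
  (M : forall i j, (X i -> X j) -> Prop).
Arguments M : clear implicits.

Hypothesis X_inh : forall i, inhabited (X i).
Hypothesis S_sym : symmetric_rel S.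
Hypothesis M_reg : regular_spine X S M.
Hypothesis M_inv : forall i j h, S i j -> M i j h -> exists g, M j i g /\ are_inverse h g.

Lemma comp_closed_rotate i j m :
  S i j -> S j m -> S i m -> comp_closed M i j m -> comp_closed M j m i.
Proof.
  intros Sij Sjm Sim C p q Mp Mq.
  destruct (X_inh j) as [x0].
  destruct (M_reg (S_sym Sij) x0 (q (p x0))) as [s [[Ms s_x0] _]].
  destruct (M_inv (S_sym Sij) Ms) as [s' [Ms' [s's _]]].
  destruct (M_inv (S_sym Sim) Mq) as [q' [Mq' [q'q qq']]].
  assert (at_s_x0 : p (s' (s x0)) = q' (s x0)) by (rewrite s's, s_x0, q'q; reflexivity).
  pose proof (regular_unique_at M_reg Sim (C _ _ Ms' Mp) Mq' at_s_x0) as ps'_q'.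
  replace (fun x => q (p x)) with s; [assumption |].
  extensionality y. transitivity (q (p (s' (s y)))).
  - rewrite (equal_f ps'_q' (s y)), qq'. reflexivity.
  - rewrite s's. reflexivity.
Qed.

Lemma comp_closed_reverse i j m :
  S i j -> S j m -> S i m -> comp_closed M i j m -> comp_closed M m j i.
Proof.
  intros Sij Sjm Sim C p q Mp Mq.
  destruct (M_inv (S_sym Sjm) Mp) as [a [Ma [ap _]]].
  destruct (M_inv (S_sym Sij) Mq) as [b [Mb [bq _]]].
  destruct (M_inv Sim (C _ _ Mb Ma)) as [c [Mc [cab _]]].
  replace (fun x => q (p x)) with c; [assumption |].
  extensionality v. transitivity (c (a (b (q (p v))))).
  - rewrite bq, ap. reflexivity.
  - apply cab.
Qed.

Lemma triangle_closed_of_comp_closed i j m :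
  S i j -> S j m -> S i m -> comp_closed M i j m -> triangle_closed M i j m.
Proof.
  intros Sij Sjm Sim C.
  pose proof (S_sym Sij) as Sji. pose proof (S_sym Sjm) as Smj.
  pose proof (S_sym Sim) as Smi.
  pose proof (comp_closed_rotate Sij Sjm Sim C) as C_jmi.
  pose proof (comp_closed_rotate Sjm Smi Sji C_jmi) as C_mij.
  pose proof (comp_closed_reverse Sij Sjm Sim C) as C_mji.
  pose proof (comp_closed_rotate Smj Sji Smi C_mji) as C_jim.
  pose proof (comp_closed_rotate Sji Sim Sjm C_jim) as C_imj.
  repeat split; assumption.
Qed.

End Triangles.

Definition sym_mor (I : Type) (X : I -> Type) (R : I -> I -> Prop)
    (Mor : forall i j, (X i -> X j) -> Prop) (i j : I) (h : X i -> X j) : Prop :=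
  (R i j /\ Mor i j h) \/ (R j i /\ exists g, Mor j i g /\ are_inverse g h).
Arguments sym_mor {I X} R Mor i j h.

Section SymmetricExtension.

Variables (I : Type) (lt : I -> I -> Prop) (X : I -> Type) (R : I -> I -> Prop)
  (Mor : forall i j, (X i -> X j) -> Prop).
Arguments Mor : clear implicits.

Hypothesis lt_order : strict_linear_order lt.
Hypothesis X_inh : forall i, inhabited (X i).
Hypothesis R_nonempty : exists i j, R i j.
Hypothesis R_lt : forall i j, lt i j -> R i j.
Hypothesis Mor_bij : forall i j, R i j -> forall f, Mor i j f -> bijection f.
Hypothesis Mor_id : forall i, R i i -> Mor i i (fun x => x).
Hypothesis Mor_inv : forall i j, R i j -> R j i -> forall f, Mor i j f ->
  exists g, Mor j i g /\ (forall x, g (f x) = x) /\ (forall y, f (g y) = y).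
Hypothesis Mor_comp : forall i j k, R i j -> R j k -> R i k -> forall f g,
  Mor i j f -> Mor j k g -> Mor i k (fun x => g (f x)).
Hypothesis Mor_reg : regular_spine X R Mor.

Lemma sym_mor_R i j h : R i j -> sym_mor R Mor i j h -> Mor i j h.
Proof.
  intros Rij [[_ Mh] | [Rji [g [Mg gh]]]]; [assumption |].
  destruct (Mor_inv Rji Rij Mg) as [g' [Mg' gg']].
  replace h with g'; [assumption |].
  exact (are_inverse_unique gg' gh).
Qed.

Lemma sym_mor_inverse i j h :
  sym_mor R Mor i j h -> exists g, sym_mor R Mor j i g /\ are_inverse h g.
Proof.
  intros [[Rij Mh] | [Rji [g [Mg gh]]]].
  - destruct (bijection_inverse (Mor_bij Rij Mh)) as [g hg].
    exists g. split; [| exact hg].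
    right. split; [assumption |]. exists h. split; assumption.
  - exists g. split; [left; split; assumption | apply are_inverse_sym; assumption].
Qed.

Lemma sym_mor_point i j :
  sym_closure R i j -> forall x y, exists h, sym_mor R Mor i j h /\ h x = y.
Proof.
  intros [Rij | Rji] x y.
  - destruct (Mor_reg Rij x y) as [h [[Mh hx] _]].
    exists h. split; [left; split |]; assumption.
  - destruct (Mor_reg Rji y x) as [f [[Mf fy] _]].
    destruct (sym_mor_inverse (or_introl (conj Rji Mf))) as [g [Mg [gf _]]].
    exists g. split; [assumption |]. rewrite <- fy. apply gf.
Qed.

Lemma sym_mor_unique_at i j h h' x :
  sym_mor R Mor i j h -> sym_mor R Mor i j h' -> h x = h' x -> h = h'.
Proof.
  intros Mh Mh' E.
  destruct (classic (R i j)) as [Rij | nRij].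
  - exact (regular_unique_at Mor_reg Rij (sym_mor_R Rij Mh) (sym_mor_R Rij Mh') E).
  - assert (Rji : R j i) by (destruct Mh as [[? _] | [? _]]; tauto).
    destruct (sym_mor_inverse Mh) as [g [Mg hg]].
    destruct (sym_mor_inverse Mh') as [g' [Mg' h'g']].
    assert (g = g') as <-.
    { apply (regular_unique_at (x := h x) Mor_reg Rji (sym_mor_R Rji Mg) (sym_mor_R Rji Mg')).
      rewrite E at 2. rewrite (proj1 hg), (proj1 h'g'). reflexivity. }
    exact (are_inverse_unique (are_inverse_sym hg) (are_inverse_sym h'g')).
Qed.

Lemma sym_mor_regular : regular_spine X (sym_closure R) (sym_mor R Mor).
Proof.
  intros i j Sij x y.
  destruct (sym_mor_point Sij x y) as [h [Mh hx]].
  exists h. split; [split; assumption |].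
  intros h' [Mh' h'x]. apply (sym_mor_unique_at x Mh Mh'). congruence.
Qed.

Lemma sym_mor_triangle_R i j m :
  R i j -> R j m -> R i m -> triangle_closed (sym_mor R Mor) i j m.
Proof.
  intros Rij Rjm Rim.
  apply (triangle_closed_of_comp_closed X_inh (sym_closure_symmetric (R := R))
           sym_mor_regular (fun i j h _ Mh => sym_mor_inverse Mh));
    try (left; assumption).
  intros p q Mp Mq. left. split; [assumption |].
  exact (Mor_comp Rij Rjm Rim (sym_mor_R Rij Mp) (sym_mor_R Rjm Mq)).
Qed.

Lemma sym_mor_triangle_loop i j :
  R i i -> sym_closure R i j -> triangle_closed (sym_mor R Mor) i i j.
Proof.
  intros Rii [Rij | Rji].
  - exact (sym_mor_triangle_R Rii Rij Rij).
  - pose proof (sym_mor_triangle_R Rji Rii Rji). unfold triangle_closed in *; tauto.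
Qed.

Lemma sym_mor_triangle_lt i j m : lt i j -> lt j m -> triangle_closed (sym_mor R Mor) i j m.
Proof.
  destruct lt_order as (_ & lt_trans & _).
  intros Lij Ljm. apply sym_mor_triangle_R; apply R_lt; eauto.
Qed.

Lemma sym_mor_comp_closed i j m :
  sym_closure R i j -> sym_closure R j m -> sym_closure R i m ->
  comp_closed (sym_mor R Mor) i j m.
Proof.
  intros Sij Sjm Sim.
  destruct (classic (i = j)) as [<- | Nij].
  { assert (Rii : R i i) by (destruct Sij; assumption).
    pose proof (sym_mor_triangle_loop Rii Sim). unfold triangle_closed in *; tauto. }
  destruct (classic (j = m)) as [<- | Njm].
  { assert (Rjj : R j j) by (destruct Sjm; assumption).
    pose proof (sym_mor_triangle_loop Rjj (sym_closure_symmetric Sij)).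
    unfold triangle_closed in *; tauto. }
  destruct (classic (i = m)) as [<- | Nim].
  { assert (Rii : R i i) by (destruct Sim; assumption).
    pose proof (sym_mor_triangle_loop Rii Sij). unfold triangle_closed in *; tauto. }
  destruct lt_order as (lt_irrefl & lt_trans & lt_total).
  destruct (lt_total i j) as [Lij | [? | Lji]];
  destruct (lt_total j m) as [Ljm | [? | Lmj]];
  destruct (lt_total i m) as [Lim | [? | Lmi]];
  try contradiction;
  first
    [ exfalso; apply (lt_irrefl i); solve [eauto]
    | match goal with
      | L1 : lt ?x ?y, L2 : lt ?y ?z |- _ =>
          pose proof (sym_mor_triangle_lt L1 L2); unfold triangle_closed in *; tauto
      end ].
Qed.

Lemma sym_mor_spine : groupoid_spine lt X (sym_closure R) (sym_mor R Mor).
Proof.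
  split; [assumption |]. split; [assumption |].
  split; [destruct R_nonempty as (i & j & Rij); exists i, j; left; assumption |].
  split; [intros i j Lij; left; apply R_lt; assumption |].
  split.
  { intros i j Sij. destruct (X_inh i) as [x], (X_inh j) as [y].
    destruct (sym_mor_point Sij x y) as [h [Mh _]]. exists h; assumption. }
  split.
  { intros i j _ h Mh. destruct (sym_mor_inverse Mh) as [g [_ hg]].
    exact (inverse_bijection hg). }
  split.
  { intros i Sii. left. assert (Rii : R i i) by (destruct Sii; assumption).
    split; [assumption | apply Mor_id; assumption]. }
  split; [intros i j _ _ h Mh; exact (sym_mor_inverse Mh) |].
  intros i j m Sij Sjm Sim p q. apply sym_mor_comp_closed; assumption.
Qed.

Lemma sym_mor_agrees i j : R i j -> forall f, sym_mor R Mor i j f <-> Mor i j f.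
Proof.
  intros Rij f. split; [exact (sym_mor_R Rij) | intros Mf; left; split; assumption].
Qed.

End SymmetricExtension.

Lemma regular_spine_sym_extension (I : Type) (lt : I -> I -> Prop) (X : I -> Type)
    (R : I -> I -> Prop) (Mor : forall i j, (X i -> X j) -> Prop) :
  groupoid_spine lt X R Mor -> regular_spine X R Mor ->
  groupoid_spine lt X (sym_closure R) (sym_mor R Mor) /\
  regular_spine X (sym_closure R) (sym_mor R Mor) /\
  (forall i j, R i j -> forall f, sym_mor R Mor i j f <-> Mor i j f).
Proof.
  intros (lt_order & X_inh & R_nonempty & R_lt & _ & Mor_bij & Mor_id & Mor_inv & Mor_comp)
    Mor_reg.
  split; [| split].
  - apply sym_mor_spine; assumption.
  - apply sym_mor_regular; assumption.
  - apply sym_mor_agrees; assumption.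
Qed.

Definition mor_via (I : Type) (X : I -> Type) (M : forall i j, (X i -> X j) -> Prop)
    (k i j : I) (h : X i -> X j) : Prop :=
  exists a b, M i k a /\ M j k b /\ forall x, b (h x) = a x.
Arguments mor_via {I X} M k i j h.

Definition full_mor (I : Type) (X : I -> Type) (M : forall i j, (X i -> X j) -> Prop)
    (i j : I) (h : X i -> X j) : Prop :=
  exists k, k <> i /\ k <> j /\ mor_via M k i j h.
Arguments full_mor {I X} M i j h.

Section FullExtension.

Variables (I : Type) (X : I -> Type) (S : I -> I -> Prop)
  (M : forall i j, (X i -> X j) -> Prop).
Arguments M : clear implicits.

Hypothesis X_inh : forall i, inhabited (X i).
Hypothesis S_off : forall i j, i <> j -> S i j.
Hypothesis three_points : exists a b c : I, a <> b /\ a <> c /\ b <> c.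
Hypothesis M_inv : forall i j, S i j -> S j i -> forall f, M i j f ->
  exists g, M j i g /\ (forall x, g (f x) = x) /\ (forall y, f (g y) = y).
Hypothesis M_comp : forall i j k, S i j -> S j k -> S i k -> forall f g,
  M i j f -> M j k g -> M i k (fun x => g (f x)).
Hypothesis M_reg : regular_spine X S M.

Let avoid2 := three_points_avoid2 three_points.

Lemma M_inverse i j f : S i j -> M i j f -> exists g, M j i g /\ are_inverse f g.
Proof.
  intros Sij Mf. apply (M_inv Sij); [| assumption].
  destruct (classic (i = j)) as [<- | Nij]; [assumption |].
  apply S_off, not_eq_sym, Nij.
Qed.

Lemma M_exists i j : S i j -> exists f, M i j f.
Proof.
  intros Sij. destruct (X_inh i) as [x], (X_inh j) as [y].
  destruct (M_reg Sij x y) as [f [[Mf _] _]]. exists f; assumption.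
Qed.

Lemma mor_via_change k l i j h :
  k <> i -> k <> j -> l <> i -> l <> j -> mor_via M k i j h -> mor_via M l i j h.
Proof.
  intros Nki Nkj Nli Nlj (a & b & Ma & Mb & ba).
  destruct (classic (k = l)) as [<- | Nkl]; [exists a, b; auto |].
  destruct (M_exists (S_off Nkl)) as [c Mc].
  exists (fun x => c (a x)), (fun y => c (b y)). split; [| split].
  - exact (M_comp (S_off (not_eq_sym Nki)) (S_off Nkl) (S_off (not_eq_sym Nli)) Ma Mc).
  - exact (M_comp (S_off (not_eq_sym Nkj)) (S_off Nkl) (S_off (not_eq_sym Nlj)) Mb Mc).
  - intros x. rewrite ba. reflexivity.
Qed.

Lemma full_mor_iff i j h : S i j -> full_mor M i j h <-> M i j h.
Proof.
  intros Sij. split.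
  - intros (k & Nki & Nkj & a & b & Ma & Mb & ba).
    destruct (M_inverse (S_off (not_eq_sym Nkj)) Mb) as [b' [Mb' [b'b _]]].
    replace h with (fun x => b' (a x)).
    + exact (M_comp (S_off (not_eq_sym Nki)) (S_off Nkj) Sij Ma Mb').
    + extensionality x. rewrite <- ba. apply b'b.
  - intros Mh. destruct (avoid2 i j) as (k & Nki & Nkj).
    destruct (M_exists (S_off (not_eq_sym Nkj))) as [b Mb].
    exists k. split; [assumption |]. split; [assumption |].
    exists (fun x => b (h x)), b. split; [| split; [assumption | reflexivity]].
    exact (M_comp Sij (S_off (not_eq_sym Nkj)) (S_off (not_eq_sym Nki)) Mh Mb).
Qed.

Lemma mor_via_compose k i j h c :
  k <> i -> k <> j -> mor_via M k i j h -> M j k c -> M i k (fun x => c (h x)).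
Proof.
  intros Nki Nkj Vh Mc.
  destruct (classic (i = j)) as [<- | Nij].
  - destruct (avoid2 i k) as (l & Nli & Nlk).
    destruct (mor_via_change Nki Nkj Nli Nli Vh) as (a & b & Ma & Mb & ba).
    destruct (M_inverse (S_off (not_eq_sym Nli)) Mb) as [b' [Mb' [b'b _]]].
    pose proof (M_comp (S_off Nli) (S_off (not_eq_sym Nki)) (S_off Nlk) Mb' Mc) as Mcb'.
    replace (fun x => c (h x)) with (fun x => c (b' (a x))).
    + exact (M_comp (S_off (not_eq_sym Nli)) (S_off Nlk) (S_off (not_eq_sym Nki)) Ma Mcb').
    + extensionality x. rewrite <- ba, b'b. reflexivity.
  - assert (Mh : M i j h).
    { apply (full_mor_iff h (S_off Nij)). exists k. split; [assumption |]. split; assumption. }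
    exact (M_comp (S_off Nij) (S_off (not_eq_sym Nkj)) (S_off (not_eq_sym Nki)) Mh Mc).
Qed.

Lemma full_mor_comp i j m h1 h2 :
  full_mor M i j h1 -> full_mor M j m h2 -> full_mor M i m (fun x => h2 (h1 x)).
Proof.
  intros F1 F2.
  destruct (classic (exists l, l <> i /\ l <> j /\ l <> m))
    as [(l & Nli & Nlj & Nlm) | no_fourth].
  - destruct F1 as (k1 & Nk1i & Nk1j & V1), F2 as (k2 & Nk2j & Nk2m & V2).
    pose proof (mor_via_change Nk1i Nk1j Nli Nlj V1) as V1l.
    destruct (mor_via_change Nk2j Nk2m Nlj Nlm V2) as (a2 & b2 & Ma2 & Mb2 & b2a2).
    exists l. split; [assumption |]. split; [assumption |].
    exists (fun x => a2 (h1 x)), b2. split; [| split].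
    + exact (mor_via_compose Nli Nlj V1l Ma2).
    + assumption.
    + intros x. apply b2a2.
  - (* Then [i], [j], [m] are the only indices, so they are distinct. *)
    assert (Nij : i <> j).
    { intros <-. destruct (avoid2 i m) as (l & ? & ?). apply no_fourth. exists l; auto. }
    assert (Njm : j <> m).
    { intros <-. destruct (avoid2 i j) as (l & ? & ?). apply no_fourth. exists l; auto. }
    assert (Nim : i <> m).
    { intros <-. destruct (avoid2 i j) as (l & ? & ?). apply no_fourth. exists l; auto. }
    apply (full_mor_iff _ (S_off Nim)).
    apply (M_comp (S_off Nij) (S_off Njm) (S_off Nim)).
    + apply (full_mor_iff _ (S_off Nij)); assumption.
    + apply (full_mor_iff _ (S_off Njm)); assumption.
Qed.

Lemma full_mor_inverse i j h :
  full_mor M i j h -> exists g, full_mor M j i g /\ are_inverse h g.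
Proof.
  intros (k & Nki & Nkj & a & b & Ma & Mb & ba).
  destruct (M_inverse (S_off (not_eq_sym Nki)) Ma) as [a' [_ [a'a aa']]].
  destruct (M_inverse (S_off (not_eq_sym Nkj)) Mb) as [b' [_ [b'b _]]].
  exists (fun y => a' (b y)). split; [| split].
  - exists k. split; [assumption |]. split; [assumption |].
    exists b, a. split; [assumption |]. split; [assumption |]. intros y. apply aa'.
  - intros x. rewrite ba. apply a'a.
  - intros y. rewrite <- (b'b (h (a' (b y)))), ba, aa', b'b. reflexivity.
Qed.

Lemma full_mor_exists i j : exists h, full_mor M i j h.
Proof.
  destruct (avoid2 i j) as (k & Nki & Nkj).
  destruct (M_exists (S_off (not_eq_sym Nki))) as [a Ma].
  destruct (M_exists (S_off (not_eq_sym Nkj))) as [b Mb].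
  destruct (M_inverse (S_off (not_eq_sym Nkj)) Mb) as [b' [_ [_ bb']]].
  exists (fun x => b' (a x)), k. split; [assumption |]. split; [assumption |].
  exists a, b. split; [assumption |]. split; [assumption |]. intros x. apply bb'.
Qed.

Lemma full_mor_id i : full_mor M i i (fun x => x).
Proof.
  destruct (avoid2 i i) as (k & Nki & _).
  destruct (M_exists (S_off (not_eq_sym Nki))) as [a Ma].
  exists k. split; [assumption |]. split; [assumption |]. exists a, a. auto.
Qed.

Lemma full_mor_spine (lt : I -> I -> Prop) :
  strict_linear_order lt -> groupoid_spine lt X (fun _ _ => True) (full_mor M).
Proof.
  intros lt_order. pose proof three_points as (a & _).
  split; [assumption |]. split; [assumption |].
  split; [exists a, a; trivial |]. split; [trivial |].
  split; [intros i j _; apply full_mor_exists |].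
  split.
  { intros i j _ h Fh. destruct (full_mor_inverse Fh) as [g [_ hg]].
    exact (inverse_bijection hg). }
  split; [intros i _; apply full_mor_id |].
  split; [intros i j _ _ h Fh; exact (full_mor_inverse Fh) |].
  intros i j m _ _ _ h1 h2. apply full_mor_comp.
Qed.

End FullExtension.

Lemma regular_spine_extends_full (I : Type) (lt : I -> I -> Prop) (X : I -> Type)
    (S : I -> I -> Prop) (M : forall i j, (X i -> X j) -> Prop) :
  groupoid_spine lt X S M -> regular_spine X S M ->
  (forall i j, i <> j -> S i j) ->
  (exists a b c : I, a <> b /\ a <> c /\ b <> c) ->
  spine_extends_to lt X S M (fun _ _ => True).
Proof.
  intros (lt_order & X_inh & _ & _ & _ & _ & _ & M_inv & M_comp) M_reg S_off three_points.
  exists (full_mor M). split.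
  - intros i j Sij f. apply (full_mor_iff (S := S)); assumption.
  - apply (full_mor_spine (S := S)); assumption.
Qed.

Theorem theorem7p7 (I : Type) (lt : I -> I -> Prop) (X : I -> Type)
    (R : I -> I -> Prop) (Mor : forall i j, (X i -> X j) -> Prop) :
  groupoid_spine lt X R Mor ->
  regular_spine X R Mor ->
  (exists S : I -> I -> Prop,
     symmetric_rel S /\ (forall i j, R i j -> S i j) /\
     spine_extends_to lt X R Mor S) /\
  ((exists a b c : I, a <> b /\ a <> c /\ b <> c) ->
     spine_extends_to lt X R Mor (fun _ _ => True)).
Proof.
  intros spine Mor_reg.
  destruct (regular_spine_sym_extension spine Mor_reg) as (sym_spine & sym_reg & sym_agrees).
  assert (R_sym : forall i j, R i j -> sym_closure R i j) by (intros i j Rij; left; exact Rij).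
  split.
  - exists (sym_closure R).
    split; [apply sym_closure_symmetric |]. split; [exact R_sym |].
    exists (sym_mor R Mor). split; assumption.
  - intros three_points.
    apply (spine_extends_to_trans R_sym sym_agrees).
    apply regular_spine_extends_full; try assumption.
    destruct spine as (lt_order & _ & _ & R_lt & _).
    exact (sym_closure_total lt_order R_lt).
Qed.
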